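(* Let $(t,\mu,\eta)$ be a pre-monad on a 0-cell $k$ in a 2-category $\mathcal K$. (1) The 2-cell $\mu\ast\eta t:t\Rightarrow t$ is idempotent. (2) Suppose there are a 1-cell $\widehat t:k\to k$ and 2-cells $\pi:t\Rightarrow\widehat t$ and $\iota:\widehat t\Rightarrow t$ with $\mu\ast\eta t=\iota\ast\pi$ and $\pi\ast\iota=\widehat t$ (the identity 2-cell). Then $(\widehat t,\ \widehat\mu:=\pi\ast\mu\ast\iota\iota,\ \widehat\eta:=\pi\ast\eta)$ is a monad in $\mathcal K$.
   Context: Conventions in a 2-category $\mathcal K$: horizontal composition and whiskering by juxtaposition in the order of functor composition; identity 1-cell of $k$ written $k$, identity 2-cell of $t$ written $t$; vertical composition $\ast$ with $\alpha\ast\beta$ meaning $\beta$ then $\alpha$; $\iota\iota$ denotes the horizontal composite of $\iota$ with itself. A pre-monad in $\mathcal K$ is a triple $(t,\mu,\eta)$ with $t:k\to k$ a 1-cell and $\mu:tt\Rightarrow t$, $\eta:k\Rightarrow t$ 2-cells satisfying $\mu\ast\mu t=\mu\ast t\mu$, $\mu\ast\eta t=\mu\ast t\eta$, $\mu\ast\eta\eta=\eta$ and $\mu\ast\mu t\ast\eta tt=\mu$. A monad is such a triple with $\mu$ associative and $\mu\ast\eta t=t=\mu\ast t\eta$. *)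

(* Since equalities of 1-cells are only
   propositional, 2-cells are transported along them with [cast2]. *)
Set Implicit Arguments.
Unset Strict Implicit.

Record TwoCatData := {
  obj : Type;
  hom : obj -> obj -> Type;
  cell : forall a b : obj, hom a b -> hom a b -> Type;
  idh : forall a : obj, hom a a;
  comp : forall a b c : obj, hom b c -> hom a b -> hom a c;  (* comp g f = g after f *)
  idc : forall (a b : obj) (f : hom a b), cell f f;
  vcomp : forall (a b : obj) (f g h : hom a b), cell g h -> cell f g -> cell f h;
     (* vcomp al be = "al * be" : first be, then al *)
  hcomp : forall (a b c : obj) (f f' : hom a b) (g g' : hom b c),
      cell g g' -> cell f f' -> cell (comp g f) (comp g' f')
     (* horizontal composite, juxtaposition in the order of functor composition *)
}.

Arguments hom {C} a b : rename.
Arguments cell {C a b} f g : rename.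
Arguments idh {C} a : rename.
Arguments comp {C a b c} g f : rename.
Arguments idc {C a b} f : rename.
Arguments vcomp {C a b f g h} al be : rename.
Arguments hcomp {C a b c f f' g g'} al be : rename.

Definition cast2 {C : TwoCatData} {a b : obj C} {f f' g g' : hom a b}
  (e1 : f = f') (e2 : g = g') (x : cell f g) : cell f' g' :=
  match e1 in _ = f1, e2 in _ = g1 return cell f1 g1 with
  | eq_refl, eq_refl => x
  end.

Record strict_2cat_axioms (C : TwoCatData) : Prop := {
  comp_assoc : forall (a b c d : obj C) (h : hom c d) (g : hom b c) (f : hom a b),
      comp h (comp g f) = comp (comp h g) f;
  comp_id_l : forall (a b : obj C) (f : hom a b), comp (idh b) f = f;
  comp_id_r : forall (a b : obj C) (f : hom a b), comp f (idh a) = f;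
  vcomp_assoc : forall (a b : obj C) (f g h i : hom a b)
      (al : cell h i) (be : cell g h) (ga : cell f g),
      vcomp al (vcomp be ga) = vcomp (vcomp al be) ga;
  vcomp_id_l : forall (a b : obj C) (f g : hom a b) (al : cell f g),
      vcomp (idc g) al = al;
  vcomp_id_r : forall (a b : obj C) (f g : hom a b) (al : cell f g),
      vcomp al (idc f) = al;
  interchange : forall (a b c : obj C) (f f' f'' : hom a b) (g g' g'' : hom b c)
      (al : cell g' g'') (be : cell g g') (ga : cell f' f'') (de : cell f f'),
      hcomp (vcomp al be) (vcomp ga de) = vcomp (hcomp al ga) (hcomp be de);
  hcomp_idc : forall (a b c : obj C) (f : hom a b) (g : hom b c),
      hcomp (idc g) (idc f) = idc (comp g f);
  hcomp_assoc : forall (a b c d : obj C) (f f' : hom a b) (g g' : hom b c)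
      (h h' : hom c d) (ga : cell h h') (be : cell g g') (al : cell f f'),
      cast2 (comp_assoc h g f) (comp_assoc h' g' f') (hcomp ga (hcomp be al))
      = hcomp (hcomp ga be) al;
  hcomp_id_l : forall (a b : obj C) (f f' : hom a b) (al : cell f f'),
      cast2 (comp_id_l f) (comp_id_l f') (hcomp (idc (idh b)) al) = al;
  hcomp_id_r : forall (a b : obj C) (f f' : hom a b) (al : cell f f'),
      cast2 (comp_id_r f) (comp_id_r f') (hcomp al (idc (idh a))) = al
}.

Record TwoCategory := {
  tc_data :> TwoCatData;
  tc_axioms : strict_2cat_axioms tc_data
}.

Section Monads.
Variables (K : TwoCategory) (k : obj K) (t : hom k k).
Let ax := tc_axioms K.

(* whiskerings: [lw s al] is "s al", [rw al s] is "al s" *)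
Definition lw {f g : hom k k} (s : hom k k) (al : cell f g) : cell (comp s f) (comp s g) :=
  hcomp (idc s) al.
Definition rw {f g : hom k k} (al : cell f g) (s : hom k k) : cell (comp f s) (comp g s) :=
  hcomp al (idc s).

(* mu * (eta t) : t => t, source k t identified with t by the unit law *)
Definition mu_eta_t (mu : cell (comp t t) t) (eta : cell (idh k) t) : cell t t :=
  cast2 (comp_id_l ax t) eq_refl (vcomp mu (rw eta t)).

Definition mu_t_eta (mu : cell (comp t t) t) (eta : cell (idh k) t) : cell t t :=
  cast2 (comp_id_r ax t) eq_refl (vcomp mu (lw t eta)).

(* mu * mu t = mu * t mu   (sources (tt)t and t(tt) identified by associativity) *)
Definition mu_assoc (mu : cell (comp t t) t) : Prop :=
  vcomp mu (rw mu t) = cast2 (comp_assoc ax t t t) eq_refl (vcomp mu (lw t mu)).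

Definition is_premonad (mu : cell (comp t t) t) (eta : cell (idh k) t) : Prop :=
  mu_assoc mu
  /\ mu_eta_t mu eta = mu_t_eta mu eta
  /\ cast2 (comp_id_l ax (idh k)) eq_refl (vcomp mu (hcomp eta eta)) = eta
  /\ vcomp mu (vcomp (rw mu t)
        (cast2 (comp_id_l ax (comp t t)) (comp_assoc ax t t t) (rw eta (comp t t))))
     = mu.

Definition is_monad (mu : cell (comp t t) t) (eta : cell (idh k) t) : Prop :=
  mu_assoc mu /\ mu_eta_t mu eta = idc t /\ mu_t_eta mu eta = idc t.

End Monads.

Arguments lw {K k f g} s al.
Arguments rw {K k f g} al s.
Arguments mu_eta_t {K k t} mu eta.
Arguments mu_t_eta {K k t} mu eta.
Arguments mu_assoc {K k t} mu.
Arguments is_premonad {K k t} mu eta.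
Arguments is_monad {K k t} mu eta.

From Stdlib Require Import ProofIrrelevance.

(* Write e := mu * eta t.  Interchange rewrites the premonad axioms
   mu * eta eta = eta and mu * mu t * eta tt = mu as e * eta = eta and
   e * mu = mu; the second gives e * e = e.  Given a splitting e = iota * pi,
   the monad laws for (mu^, eta^) reduce, after pushing iota through the
   composites, to the premonad laws for (mu, eta) absorbed by e, and the
   remaining iota * pi * iota collapses by pi * iota = 1. *)

Section Transport.
Context {C : TwoCatData} {a b : obj C}.

Lemma cast2_id {f g : hom a b} (e1 : f = f) (e2 : g = g) (x : cell f g) :
  cast2 e1 e2 x = x.
Proof.
  rewrite (proof_irrelevance _ e1 eq_refl), (proof_irrelevance _ e2 eq_refl).
  reflexivity.
Qed.

Lemma cast2_cast2 {f f1 f2 g g1 g2 : hom a b}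
  (e1 : f = f1) (e2 : g = g1) (e3 : f1 = f2) (e4 : g1 = g2)
  (e5 : f = f2) (e6 : g = g2) (x : cell f g) :
  cast2 e3 e4 (cast2 e1 e2 x) = cast2 e5 e6 x.
Proof. destruct e1, e2, e3, e4. symmetry; apply cast2_id. Qed.

Lemma cast2_sym {f f' g g' : hom a b} (e1 : f = f') (e2 : g = g')
  (x : cell f g) (y : cell f' g') :
  cast2 e1 e2 x = y -> x = cast2 (eq_sym e1) (eq_sym e2) y.
Proof. destruct e1, e2. auto. Qed.

Lemma vcomp_cast2 {f f' g g' h h' : hom a b}
  (e1 : f = f') (e2 : g = g') (e3 : h = h') (x : cell g h) (y : cell f g) :
  vcomp (cast2 e2 e3 x) (cast2 e1 e2 y) = cast2 e1 e3 (vcomp x y).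
Proof. destruct e1, e2, e3. reflexivity. Qed.

Lemma vcomp_cast2_src {f f' g h : hom a b} (e : f = f') (x : cell g h) (y : cell f g) :
  vcomp x (cast2 e eq_refl y) = cast2 e eq_refl (vcomp x y).
Proof. destruct e. reflexivity. Qed.

Lemma vcomp_cast2_mid {f g g' h : hom a b} (e : g = g') (x : cell g h) (y : cell f g') :
  vcomp (cast2 e eq_refl x) y = vcomp x (cast2 eq_refl (eq_sym e) y).
Proof. destruct e. reflexivity. Qed.

End Transport.

Section Whiskering.
Context (K : TwoCategory) (k : obj K).
Local Notation ax := (tc_axioms K).

Lemma hcomp_lw_rw {f f' g g' : hom k k} (x : cell g g') (al : cell f f') :
  hcomp x al = vcomp (lw g' al) (rw x f).
Proof.
  unfold lw, rw. rewrite <- (interchange ax), (vcomp_id_l ax), (vcomp_id_r ax).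
  reflexivity.
Qed.

Lemma hcomp_idh_l {f f' g : hom k k} (x : cell (idh k) g) (al : cell f f') :
  hcomp x al
  = vcomp (rw x f') (cast2 (eq_sym (comp_id_l ax f)) (eq_sym (comp_id_l ax f')) al).
Proof.
  rewrite <- (cast2_sym _ _ _ _ (hcomp_id_l ax al)).
  unfold rw. rewrite <- (interchange ax), (vcomp_id_l ax), (vcomp_id_r ax).
  reflexivity.
Qed.

Lemma hcomp_idh_r {f f' g : hom k k} (x : cell (idh k) g) (al : cell f f') :
  hcomp al x
  = vcomp (lw f' x) (cast2 (eq_sym (comp_id_r ax f)) (eq_sym (comp_id_r ax f')) al).
Proof.
  rewrite <- (cast2_sym _ _ _ _ (hcomp_id_r ax al)).
  unfold lw. rewrite <- (interchange ax), (vcomp_id_l ax), (vcomp_id_r ax).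
  reflexivity.
Qed.

Lemma vcomp_hcomp_rw {f f' g g' g'' : hom k k}
  (al : cell g' g'') (be : cell f f') (ga : cell g g') :
  vcomp (hcomp al be) (rw ga f) = hcomp (vcomp al ga) be.
Proof. unfold rw. rewrite <- (interchange ax), (vcomp_id_r ax). reflexivity. Qed.

Lemma vcomp_hcomp_lw {f f' f'' g g' : hom k k}
  (al : cell g g') (be : cell f' f'') (ga : cell f f') :
  vcomp (hcomp al be) (lw g ga) = hcomp al (vcomp be ga).
Proof. unfold lw. rewrite <- (interchange ax), (vcomp_id_r ax). reflexivity. Qed.

Lemma hcomp_vcomp_rw {f f' g g' g'' : hom k k}
  (al : cell g' g'') (be : cell g g') (ga : cell f f') :
  hcomp (vcomp al be) ga = vcomp (rw al f') (hcomp be ga).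
Proof. unfold rw. rewrite <- (interchange ax), (vcomp_id_l ax). reflexivity. Qed.

Lemma hcomp_vcomp_lw {f f' f'' g g' : hom k k}
  (ga : cell g g') (al : cell f' f'') (be : cell f f') :
  hcomp ga (vcomp al be) = vcomp (lw g' al) (hcomp ga be).
Proof. unfold lw. rewrite <- (interchange ax), (vcomp_id_l ax). reflexivity. Qed.

End Whiskering.

Section Premonad.
Variables (K : TwoCategory) (k : obj K) (t : hom k k)
  (mu : cell (comp t t) t) (eta : cell (idh k) t).
Local Notation ax := (tc_axioms K).

Lemma mu_eta_t_vcomp {f : hom k k} (al : cell f t) :
  vcomp (mu_eta_t mu eta) al = cast2 (comp_id_l ax f) eq_refl (vcomp mu (hcomp eta al)).
Proof.
  unfold mu_eta_t. rewrite vcomp_cast2_mid, hcomp_idh_l, (vcomp_assoc ax).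
  rewrite <- (cast2_cast2 eq_refl (eq_sym (comp_id_l ax t)) (eq_sym (comp_id_l ax f))
               eq_refl).
  rewrite vcomp_cast2_src, (cast2_cast2 _ _ _ _ eq_refl eq_refl).
  reflexivity.
Qed.

Lemma mu_t_eta_vcomp {f : hom k k} (al : cell f t) :
  vcomp (mu_t_eta mu eta) al = cast2 (comp_id_r ax f) eq_refl (vcomp mu (hcomp al eta)).
Proof.
  unfold mu_t_eta. rewrite vcomp_cast2_mid, hcomp_idh_r, (vcomp_assoc ax).
  rewrite <- (cast2_cast2 eq_refl (eq_sym (comp_id_r ax t)) (eq_sym (comp_id_r ax f))
               eq_refl).
  rewrite vcomp_cast2_src, (cast2_cast2 _ _ _ _ eq_refl eq_refl).
  reflexivity.
Qed.

Hypothesis premonad : is_premonad mu eta.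

Lemma mu_eta_t_eta : vcomp (mu_eta_t mu eta) eta = eta.
Proof.
  destruct premonad as (_ & _ & unit_eta & _).
  rewrite mu_eta_t_vcomp. exact unit_eta.
Qed.

Lemma mu_eta_t_mu : vcomp (mu_eta_t mu eta) mu = mu.
Proof.
  destruct premonad as (assoc & _ & _ & unit_mu).
  rewrite mu_eta_t_vcomp, hcomp_lw_rw.
  unfold mu_assoc in assoc.
  rewrite (vcomp_assoc ax mu), assoc, vcomp_cast2, <- (vcomp_assoc ax mu) in unit_mu.
  exact unit_mu.
Qed.

Lemma mu_eta_t_idem : vcomp (mu_eta_t mu eta) (mu_eta_t mu eta) = mu_eta_t mu eta.
Proof.
  unfold mu_eta_t at 2 3. rewrite vcomp_cast2_src, (vcomp_assoc ax), mu_eta_t_mu.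
  reflexivity.
Qed.

Section Splitting.
Variables (th : hom k k) (pi : cell t th) (iota : cell th t).
Hypothesis split_eq : mu_eta_t mu eta = vcomp iota pi.
Hypothesis retract : vcomp pi iota = idc th.

Local Notation muh := (vcomp pi (vcomp mu (hcomp iota iota))).
Local Notation etah := (vcomp pi eta).

Lemma vcomp_pi_iota {f : hom k k} (al : cell f th) :
  vcomp pi (vcomp iota al) = al.
Proof. rewrite (vcomp_assoc ax), retract, (vcomp_id_l ax). reflexivity. Qed.

Lemma split_unit_l : mu_eta_t muh etah = idc th.
Proof.
  unfold mu_eta_t at 1.
  rewrite <- !(vcomp_assoc ax), vcomp_hcomp_rw, (vcomp_assoc ax iota), <- split_eq,
    mu_eta_t_eta, <- vcomp_cast2_src, <- mu_eta_t_vcomp, split_eq, <- (vcomp_assoc ax).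
  rewrite vcomp_pi_iota. exact retract.
Qed.

Lemma split_unit_r : mu_t_eta muh etah = idc th.
Proof.
  destruct premonad as (_ & unit_eq & _).
  unfold mu_t_eta at 1.
  rewrite <- !(vcomp_assoc ax), vcomp_hcomp_lw, (vcomp_assoc ax iota), <- split_eq,
    mu_eta_t_eta, <- vcomp_cast2_src, <- mu_t_eta_vcomp, <- unit_eq, split_eq,
    <- (vcomp_assoc ax).
  rewrite vcomp_pi_iota. exact retract.
Qed.

Lemma iota_muh : vcomp iota muh = vcomp mu (hcomp iota iota).
Proof.
  rewrite (vcomp_assoc ax iota), <- split_eq, (vcomp_assoc ax), mu_eta_t_mu.
  reflexivity.
Qed.

Lemma split_assoc : mu_assoc muh.
Proof.
  destruct premonad as (assoc & _).
  unfold mu_assoc in *.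
  rewrite <- !(vcomp_assoc ax), vcomp_hcomp_rw, vcomp_hcomp_lw, !iota_muh.
  rewrite hcomp_vcomp_rw, hcomp_vcomp_lw, <- (hcomp_assoc ax iota iota iota).
  rewrite (vcomp_assoc ax mu), assoc, vcomp_cast2, vcomp_cast2_src, (vcomp_assoc ax mu).
  reflexivity.
Qed.

End Splitting.
End Premonad.

Theorem lemma2p2 (K : TwoCategory) (k : obj K) (t : hom k k)
  (mu : cell (comp t t) t) (eta : cell (idh k) t) :
  is_premonad mu eta ->
  vcomp (mu_eta_t mu eta) (mu_eta_t mu eta) = mu_eta_t mu eta
  /\
  (forall (th : hom k k) (pi : cell t th) (iota : cell th t),
      mu_eta_t mu eta = vcomp iota pi ->
      vcomp pi iota = idc th ->
      is_monad (vcomp pi (vcomp mu (hcomp iota iota))) (vcomp pi eta)).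
Proof.
  intros premonad. split.
  - apply mu_eta_t_idem; assumption.
  - intros th pi iota split_eq retract. repeat split.
    + eapply split_assoc; eassumption.
    + eapply split_unit_l; eassumption.
    + eapply split_unit_r; eassumption.
Qed.
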